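(* Let $M=(m_i)$, $N=(n_i)$ satisfy conditions (i) and (ii) below and let $p_k=5n_1+\sum_{1\le i<k}s_in_{2i}$ for $k\ge1$. Let $k\ge1$, $a\in\mathbb N\cup\{0\}$ and let $a_1,\dots,a_{k-1}$ be non-negative integers such that $m_1^{a}\prod_{1\le i<k}m_{2i}^{a_i}<m_{2k}$. Then $an_1+\sum_{1\le i<k}a_in_{2i}<p_k$.
   Context: $M=(m_i)$, $N=(n_i)$ are increasing sequences of positive integers such that (i) $m_1>3$, $m_2=m_1^5$, $m_{2j+1}=m_{2j}^5$ for $j\ge1$, and there is an increasing sequence $(s_i)$ of positive integers with $m_{2j}=\prod_{i=1}^{j-1}m_{2i}^{s_i}$ for $j\ge2$; (ii) defining for $j\ge2$ $f_j=\max\{\rho n_1+\sum_{1\le i<j}\rho_in_{2i}:\ \rho,\rho_i\in\mathbb N\cup\{0\},\ m_1^{\rho}\prod_{1\le i<j}m_{2i}^{\rho_i}<m_{2j}\}$, one has $4f_j<n_{2j}$ for all $j\ge2$, and $5n_1<n_2$. *)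

(* Sequences are nat -> nat, indexed from 1 (index 0 unused). *)
From mathcomp Require Import all_boot.
Set Implicit Arguments. Unset Strict Implicit. Unset Printing Implicit Defensive.

Definition feasible (m : nat -> nat) (j r : nat) (rs : nat -> nat) : bool :=
  m 1 ^ r * \prod_(1 <= i < j) m (2 * i) ^ rs i < m (2 * j).

Definition wsum (n : nat -> nat) (j r : nat) (rs : nat -> nat) : nat :=
  r * n 1 + \sum_(1 <= i < j) rs i * n (2 * i).

Definition ffseq (j B : nat) (t : {ffun 'I_j -> 'I_B}) : nat -> nat :=
  fun i => oapp (fun k : 'I_j => nat_of_ord (t k)) 0 (insub i).

(* f_j = max { r n_1 + sum rho_i n_{2i} : m_1^r prod m_{2i}^{rho_i} < m_{2j} }.
   The exponents are searched in the box [0, m_{2j}), which contains every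
   feasible exponent vector since the bases are >= 2 (so b^e > e). *)
Definition fmax (m n : nat -> nat) (j : nat) : nat :=
  \max_(r < m (2 * j))
    \max_(t : {ffun 'I_j -> 'I_(m (2 * j))} | feasible m j r (ffseq t))
      wsum n j r (ffseq t).

Definition pk (n s : nat -> nat) (k : nat) : nat :=
  5 * n 1 + \sum_(1 <= i < k) s i * n (2 * i).

Definition cond_i (m s : nat -> nat) : Prop :=
  [/\ (forall i, 1 <= i -> 0 < m i /\ m i < m i.+1),
      (forall i, 1 <= i -> 0 < s i /\ s i < s i.+1),
      3 < m 1 /\ m 2 = m 1 ^ 5,
      (forall j, 1 <= j -> m (2 * j).+1 = m (2 * j) ^ 5) &
      (forall j, 2 <= j -> m (2 * j) = \prod_(1 <= i < j) m (2 * i) ^ s i)].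

Definition cond_ii (m n : nat -> nat) : Prop :=
  [/\ (forall i, 1 <= i -> 0 < n i /\ n i < n i.+1),
      (forall j, 2 <= j -> 4 * fmax m n j < n (2 * j)) &
      5 * n 1 < n 2].

From mathcomp Require Import all_boot.
From mathcomp Require Import zify.
Set Implicit Arguments. Unset Strict Implicit. Unset Printing Implicit Defensive.

(* For k = 1, m_1^a < m_2 = m_1^5 forces a < 5.  For
   k >= 2 the top exponent a_{k-1} =: b is split off: since m_{2k} is a pure
   power x^e of x = m_{2(k-1)} (e = s_1 if k = 2, e = s_{k-1} + 1 if k > 2),
   the inequality mono (k-1) a as * x^b < x^e gives b < e and
   mono (k-1) a as < x^c with c = e - b >= 1.  For k = 2 this means a < 5c,
   and 5 n_1 < n_2 closes the case.  For k > 2, if c = 1 the lower vector is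
   feasible at level k-1 and the induction hypothesis applies; if c >= 2,
   dividing all exponents by c yields a feasible vector at level k-1, so the
   lower weighted sum is at most c f + (c-1) f (remainders are bounded by the
   all-ones vector, itself feasible), which is < (c-1) n_{2(k-1)} because
   4 f_{k-1} < n_{2(k-1)}.  In both cases the total is below s_{k-1} n_{2(k-1)}
   plus the previous bound, i.e. below p_k. *)

Definition mono (m : nat -> nat) (j r : nat) (rs : nat -> nat) : nat :=
  m 1 ^ r * \prod_(1 <= i < j) m (2 * i) ^ rs i.

Lemma feasibleE m j r rs : feasible m j r rs = (mono m j r rs < m (2 * j)).
Proof. by []. Qed.

Lemma monoS m j r rs :
  0 < j -> mono m j.+1 r rs = mono m j r rs * m (2 * j) ^ rs j.
Proof. by move=> j_gt0; rewrite /mono big_nat_recr //= mulnA. Qed.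

Lemma mono1 m r rs : mono m 1 r rs = m 1 ^ r.
Proof. by rewrite /mono big_geq // muln1. Qed.

Lemma wsumS n j r rs :
  0 < j -> wsum n j.+1 r rs = wsum n j r rs + rs j * n (2 * j).
Proof. by move=> j_gt0; rewrite /wsum big_nat_recr //= addnA. Qed.

Lemma pkS n s k : 0 < k -> pk n s k.+1 = pk n s k + s k * n (2 * k).
Proof. by move=> k_gt0; rewrite /pk big_nat_recr //= addnA. Qed.

Lemma split_top_power R x b e :
  0 < R -> 1 < x -> R * x ^ b < x ^ e -> b < e /\ R < x ^ (e - b).
Proof.
move=> R_gt0 x_gt1 lt_Rxb_xe.
have lt_be : b < e.
  rewrite -(ltn_exp2l _ _ x_gt1); apply: leq_ltn_trans lt_Rxb_xe.
  exact: leq_pmull.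
split=> //; move: lt_Rxb_xe.
rewrite -{1}(subnKC (ltnW lt_be)) expnD mulnC ltn_pmul2l //.
by rewrite expn_gt0 ltnW.
Qed.

Lemma exponent_split T e x : 0 < T -> e * x <= T * (e %/ T * x) + (T - 1) * x.
Proof.
move=> T_gt0; rewrite {1}(divn_eq e T) mulnDl mulnA (mulnC T).
apply: leq_add => //; apply: leq_mul => //.
by rewrite subn1 -ltnS prednK // ltn_pmod.
Qed.

Lemma wsum_split n j T a as_ : 0 < T ->
  wsum n j a as_ <= T * wsum n j (a %/ T) (fun i => as_ i %/ T)
                    + (T - 1) * wsum n j 1 (fun _ => 1).
Proof.
move=> T_gt0; rewrite /wsum mul1n mulnDr (mulnDr (T - 1)) addnACA.
apply: leq_add; first exact: exponent_split.
rewrite !big_distrr -big_split /=; apply: leq_sum => i _.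
by rewrite mul1n exponent_split.
Qed.

Section Growth.

Variables m s : nat -> nat.
Hypothesis condM : cond_i m s.

Lemma m_gt1 i : 0 < i -> 1 < m i.
Proof.
have [m_incr _ [m1_gt3 _] _ _] := condM.
elim: i => [//|[|i] IH] _; first exact: leq_trans _ m1_gt3.
exact: ltn_trans (IH isT) (m_incr i.+1 isT).2.
Qed.

Lemma m_gt0 i : 0 < i -> 0 < m i.
Proof. by move/m_gt1/ltnW. Qed.

Lemma m_even_gt1 i : 0 < i -> 1 < m (2 * i).
Proof. by move=> i_gt0; rewrite m_gt1 // muln_gt0. Qed.

Lemma m_even_gt0 i : 0 < i -> 0 < m (2 * i).
Proof. by move/m_even_gt1/ltnW. Qed.

Lemma prod_even_gt0 j e : 0 < \prod_(1 <= i < j) m (2 * i) ^ e i.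
Proof.
rewrite big_nat_cond; apply: prodn_cond_gt0 => i /andP[/andP[i_gt0 _] _].
by rewrite expn_gt0 m_even_gt0.
Qed.

Lemma mono_gt0 j r rs : 0 < mono m j r rs.
Proof. by rewrite muln_gt0 expn_gt0 m_gt0 ?prod_even_gt0. Qed.

Lemma factor_le_prod j e i : 1 <= i < j ->
  m (2 * i) ^ e i <= \prod_(1 <= i < j) m (2 * i) ^ e i.
Proof.
case/andP=> i_gt0 lt_ij; apply: dvdn_leq; first exact: prod_even_gt0.
rewrite (big_cat_nat _ (n := i)) ?(ltnW lt_ij) //= [X in _ %| _ * X]big_ltn //.
exact/dvdn_mull/dvdn_mulr.
Qed.

Lemma feasible_bounded j r rs : feasible m j r rs ->
  r < m (2 * j) /\ (forall i, 1 <= i < j -> rs i < m (2 * j)).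
Proof.
rewrite feasibleE /mono => feas; split.
  apply: leq_ltn_trans feas; apply: leq_trans (leq_pmulr _ (prod_even_gt0 _ _)).
  exact/ltnW/ltn_expl/m_gt1.
move=> i /[dup] /andP[i_gt0 _] i_range; apply: leq_ltn_trans feas.
apply: leq_trans (ltnW (ltn_expl (rs i) (m_even_gt1 i_gt0))) _.
apply: leq_trans (factor_le_prod rs i_range) _.
by apply: leq_pmull; rewrite expn_gt0 m_gt0.
Qed.

Lemma m_even_next j : 2 <= j -> m (2 * j.+1) = m (2 * j) ^ (s j).+1.
Proof.
have [_ _ _ _ m_prod] := condM.
move=> j_ge2; rewrite (m_prod j.+1 (ltnW j_ge2)) big_nat_recr ?(ltnW j_ge2) //= -m_prod //.
by rewrite expnS.
Qed.

Lemma feasible_ones j : 0 < j -> feasible m j 1 (fun _ => 1).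
Proof.
have [m_incr _ _ m_odd _] := condM.
rewrite feasibleE; elim: j => [//|[|j] IH] _.
  by rewrite mono1 expn1 (m_incr 1 isT).2.
rewrite monoS // expn1; set x := m (2 * j.+1).
have x_gt1 : 1 < x by exact: m_even_gt1.
apply: (@leq_trans (x * x).+1); first by rewrite ltnS leq_mul2r (ltnW (IH isT)) orbT.
have -> : 2 * j.+2 = (2 * j.+1).+2 by rewrite mulnS.
apply: leq_trans (m_incr (2 * j.+1).+1 isT).2.
rewrite m_odd // -/x ltnS -[x * x]/(x ^ 2); exact: leq_pexp2l (ltnW x_gt1) _.
Qed.

Lemma feasible_div j T a as_ : 0 < T ->
  mono m j a as_ < m (2 * j) ^ T -> feasible m j (a %/ T) (fun i => as_ i %/ T).
Proof.
move=> T_gt0 lt_mono; rewrite feasibleE -(ltn_exp2r _ _ T_gt0).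
apply: leq_ltn_trans lt_mono; rewrite /mono !expnMn -expnM.
rewrite (big_morph (fun x => x ^ T) (fun x y => expnMn x y T) (exp1n T)).
apply: leq_mul; first by rewrite leq_pexp2l ?m_gt0 ?leq_divM.
rewrite big_nat_cond [X in _ <= X]big_nat_cond.
apply: leq_prod => i /andP[/andP[i_gt0 _] _].
by rewrite -expnM leq_pexp2l ?m_even_gt0 ?leq_divM.
Qed.

Lemma wsum_le_fmax n j r rs : feasible m j r rs -> wsum n j r rs <= fmax m n j.
Proof.
move=> feas; have [r_lt rs_lt] := feasible_bounded feas.
pose t : {ffun 'I_j -> 'I_(m (2 * j))} :=
  [ffun i : 'I_j => insubd (Ordinal r_lt) (rs (nat_of_ord i))].
have t_rs i : 1 <= i < j -> ffseq t i = rs i.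
  move=> /[dup] /andP[_ lt_ij] i_range.
  by rewrite /ffseq insubT /= ffunE val_insubd rs_lt.
have -> : wsum n j r rs = wsum n j r (ffseq t).
  by rewrite /wsum; congr (_ + _); apply: eq_big_nat => i /t_rs ->.
have feas_t : feasible m j r (ffseq t).
  by rewrite feasibleE /mono (eq_big_nat _ _ (fun i i_range => congr1 _ (t_rs i i_range))).
apply: leq_trans (leq_bigmax (Ordinal r_lt)) => /=.
exact: (leq_bigmax_cond t feas_t).
Qed.

End Growth.

Section Bounds.

Variables m n s : nat -> nat.
Hypotheses (condM : cond_i m s) (condN : cond_ii m n).

Lemma n1_gt0 : 0 < n 1.
Proof. by have [n_incr _ _] := condN; exact: (n_incr 1 isT).1. Qed.

(* Level 1: m_1^a < m_1^5 gives a < 5. *)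
Lemma bound_level1 a as_ : feasible m 1 a as_ -> wsum n 1 a as_ < pk n s 1.
Proof.
have [_ _ [_ m2E] _ _] := condM.
rewrite feasibleE mono1 m2E ltn_exp2l ?(m_gt1 condM) // => a_lt5.
by rewrite /wsum /pk !big_geq // !addn0 ltn_pmul2r ?n1_gt0.
Qed.

(* Level 2: m_4 = m_2^{s_1} = m_1^{5 s_1}, and 5 n_1 < n_2. *)
Lemma bound_level2 a as_ : feasible m 2 a as_ -> wsum n 2 a as_ < pk n s 2.
Proof.
have [_ _ [_ m2E] _ m_prod] := condM; have [_ _ n2_big] := condN.
rewrite feasibleE monoS // (m_prod 2 isT) big_nat1 mono1.
case/split_top_power; rewrite ?expn_gt0 ?(m_gt0 condM) ?(m_even_gt1 condM) //.
move=> lt_b_s1; rewrite m2E -expnM ltn_exp2l ?(m_gt1 condM) // => lt_a.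
have [c s1E] : exists c, s 1 = as_ 1 + c.+1.
  by exists (s 1 - as_ 1).-1; lia.
move: lt_a; rewrite s1E addKn => lt_a.
rewrite wsumS // pkS // /wsum /pk !big_geq // !addn0 s1E.
have : a * n 1 < c.+1 * n 2.
  apply: leq_trans (_ : 5 * c.+1 * n 1 <= _); first by rewrite ltn_pmul2r ?n1_gt0.
  by rewrite mulnAC [_ * c.+1]mulnC leq_mul2l (ltnW n2_big) orbT.
change (2 * 1) with 2; lia.
Qed.

(* Key estimate at level j >= 2: a monomial below m_{2j}^{c+1} with c >= 1
   has weighted sum below c n_{2j}, since it is at most (c+1) f_j + c f_j. *)
Lemma wsum_lt_of_power_bound j c a as_ : 2 <= j -> 0 < c ->
  mono m j a as_ < m (2 * j) ^ c.+1 -> wsum n j a as_ < c * n (2 * j).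
Proof.
have [_ fmax_small _] := condN.
move=> j_ge2 c_gt0 lt_mono; set f := fmax m n j.
have f_small : 4 * f < n (2 * j) by apply: fmax_small.
have quot_le : wsum n j (a %/ c.+1) (fun i => as_ i %/ c.+1) <= f.
  exact/(wsum_le_fmax condM)/(feasible_div condM).
have ones_le : wsum n j 1 (fun _ => 1) <= f.
  exact/(wsum_le_fmax condM)/(feasible_ones condM)/ltnW.
apply: leq_ltn_trans (wsum_split n j a as_ (ltn0Sn c)) _.
rewrite subSS subn0; apply: (@leq_ltn_trans (c.+1 * f + c * f)).
  by apply: leq_add; rewrite leq_mul2l ?quot_le ?ones_le orbT.
apply: (@leq_ltn_trans (c * (4 * f))); first nia.
by rewrite ltn_pmul2l.
Qed.

Lemma bound_step j : 2 <= j ->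
  (forall a as_, feasible m j a as_ -> wsum n j a as_ < pk n s j) ->
  forall a as_, feasible m j.+1 a as_ -> wsum n j.+1 a as_ < pk n s j.+1.
Proof.
move=> j_ge2 IH a as_; have j_gt0 : 0 < j by exact: ltnW.
rewrite feasibleE monoS // (m_even_next condM) //.
case/split_top_power; rewrite ?(mono_gt0 condM) ?(m_even_gt1 condM) //.
rewrite ltnS => le_b_s; rewrite wsumS // pkS //.
have [c sjE] : exists c, (s j).+1 - as_ j = c.+1 by exists (s j - as_ j); rewrite subSn.
rewrite sjE; case: c sjE => [|c] sjE lt_mono.
  have -> : s j = as_ j by lia.
  by rewrite ltn_add2r IH // feasibleE -[m (2 * j)]expn1.
have := wsum_lt_of_power_bound j_ge2 (ltn0Sn c) lt_mono.
have -> : s j = as_ j + c.+1 by lia.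
rewrite mulnDl; lia.
Qed.

End Bounds.

Theorem mainTheorem6 (m n s : nat -> nat) :
  cond_i m s -> cond_ii m n ->
  forall (k a : nat) (as_ : nat -> nat),
    1 <= k -> feasible m k a as_ -> wsum n k a as_ < pk n s k.
Proof.
move=> condM condN; elim=> [//|[|[|j]] IH] a as_ _.
- exact: bound_level1.
- exact: bound_level2.
- by apply: (bound_step condM condN) => // b bs; apply: IH.
Qed.
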